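(* For $1\le i\le k$ let $G_i$ be an $r_i$-regular graph with $n_i$ vertices, let $r=r_1\cdots r_k$, and suppose $\gcd(n_i, r/r_i)=1$ for every $i$. If each $G_i$ is $\mathbb{Z}_{n_i}$-distance antimagic, then the direct product $G_1\times\cdots\times G_k$ is $\mathbb{Z}_{n_1\cdots n_k}$-distance antimagic.
   Context: The direct product $G_1\times\cdots\times G_k$ has vertex set $V(G_1)\times\cdots\times V(G_k)$, with $(x_1,\ldots,x_k)$ and $(y_1,\ldots,y_k)$ adjacent iff $x_iy_i\in E(G_i)$ for every $i$. For a graph $G$ with $n$ vertices, a $\mathbb{Z}_n$-distance antimagic labelling is a bijection $f:V(G)\to\mathbb{Z}_n$ such that the weights $w_f(x)=\sum_{y\in N(x)} f(y)$ (mod $n$, $N(x)$ the open neighbourhood) are pairwise distinct; $G$ is $\mathbb{Z}_n$-distance antimagic if such a labelling exists. *)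

From mathcomp Require Import all_boot.
Set Implicit Arguments. Unset Strict Implicit. Unset Printing Implicit Defensive.

Definition simple_graph (T : finType) (e : rel T) : Prop :=
  symmetric e /\ irreflexive e.

Definition regular (T : finType) (e : rel T) (r : nat) : Prop :=
  forall x : T, #|[pred y | e x y]| = r.

(* Z_n-distance antimagic, n = #|T|: Z_n is represented by 'I_n with
   addition modulo n; weight w_f(x) = (sum_{y in N(x)} f y) mod n. *)
Definition weight (T : finType) (e : rel T) (f : T -> 'I_#|T|) (x : T) : nat :=
  (\sum_(y | e x y) nat_of_ord (f y)) %% #|T|.

Definition Zn_distance_antimagic (T : finType) (e : rel T) : Prop :=
  exists f : T -> 'I_#|T|, bijective f /\ injective (weight e f).

Definition direct_product (k : nat) (T : 'I_k -> finType)
    (e : forall i, rel (T i)) : rel {dffun forall i, T i} :=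
  fun x y => [forall i, e i (x i) (y i)].

From mathcomp Require Import all_boot.

(* Fix Z_{n_i}-distance antimagic
   labellings f_i of the factors G_i and put n = n_1 ... n_k.  Label a vertex
   y = (y_1, ..., y_k) of the product by its mixed-radix code
      F(y) = sum_i M_i f_i(y_i)  (mod n),   M_i = n_1 ... n_(i-1).
   F is a bijection because mixed-radix expansions are unique.  In the
   product, a vertex x has exactly (r / r_i) neighbours with a prescribed
   i-th coordinate z adjacent to x_i, so the weight of x is
      w_F(x) = sum_i M_i (r / r_i) w_(f_i)(x_i)  (mod n),
   again a mixed-radix code, with digits w_(f_i)(x_i) scaled by r / r_i.
   Since r / r_i is a unit modulo n_i, the scaled digits still determine x_i,
   and uniqueness of mixed-radix expansions makes w_F injective. *)

Lemma card_gt0_of {D : finType} (y : D) : 0 < #|D|.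
Proof. by apply/card_gt0P; exists y. Qed.

Lemma sum_split_at (k : nat) (F : 'I_k -> nat) (i : 'I_k) :
  \sum_(j < k) F j =
  \sum_(j < k | j < i) F j + F i + \sum_(j < k | i < j) F j.
Proof.
rewrite (bigID (fun j : 'I_k => j < i)) /= -addnA; congr (_ + _).
rewrite (bigD1 i) ?ltnn //=; congr (_ + _); apply: eq_bigl => j.
by rewrite -leqNgt ltn_neqAle -val_eqE /= eq_sym andbC.
Qed.

Lemma coprime_mulKmod {n c a b : nat} :
  coprime n c -> c * a = c * b %[mod n] -> a = b %[mod n].
Proof.
move=> co_nc; wlog le_ab: a b / a <= b.
  move=> W; case: (leqP a b) => [|/ltnW le_ba eq_cab]; first exact: W.
  by symmetry; apply: W.
move=> /eqP; rewrite eq_sym eqn_mod_dvd ?leq_mul2l ?le_ab ?orbT //.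
by rewrite -mulnBr Gauss_dvdr // -eqn_mod_dvd // eq_sym => /eqP.
Qed.

Section MixedRadix.

Variables (k : nat) (n : 'I_k -> nat).

Definition radix (i : 'I_k) : nat := \prod_(j < k | j < i) n j.

Lemma radix_mul_base (i : 'I_k) : radix i * n i = \prod_(j < k | j <= i) n j.
Proof.
rewrite [RHS](bigD1 i) //= mulnC; congr (_ * _); apply: eq_bigl => j.
by rewrite ltn_neqAle andbC.
Qed.

Lemma radix_mul_base_dvd (i j : 'I_k) : i < j -> radix i * n i %| radix j.
Proof.
move=> lt_ij; rewrite radix_mul_base /radix.
rewrite [X in _ %| X](bigID (fun l : 'I_k => l <= i)) /=.
suff -> : \prod_(l < k | (l < j) && (l <= i)) n l = \prod_(l < k | l <= i) n l.
  exact: dvdn_mulr.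
apply: eq_bigl => l; apply/andP/idP => [[] //|le_li].
by split=> //; exact: leq_ltn_trans lt_ij.
Qed.

Lemma radix_mul_base_dvd_prod (i : 'I_k) :
  radix i * n i %| \prod_(j < k) n j.
Proof.
by rewrite radix_mul_base [X in _ %| X](bigID (fun j : 'I_k => j <= i)) dvdn_mulr.
Qed.

Variables (D : 'I_k -> Type) (h : forall i, D i -> nat).
Hypothesis n_gt0 : forall i, 0 < n i.
Hypothesis h_inj : forall i a b, h i a = h i b %[mod n i] -> a = b.

Let code (x : forall i, D i) : nat := \sum_(i < k) radix i * h i (x i).

(* If two tuples agree below position i and have congruent codes, they agree
   at i: reduce modulo M_i * n_i, where the higher digits vanish. *)
Lemma mixed_radix_digit (x y : forall i, D i) (i : 'I_k) :
  (forall j : 'I_k, j < i -> x j = y j) ->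
  code x = code y %[mod \prod_(j < k) n j] -> x i = y i.
Proof.
move=> eq_low eq_code; apply: h_inj.
have radix_gt0 : 0 < radix i by apply: prodn_gt0.
have high_dvd (z : forall i, D i) :
    radix i * n i %| \sum_(j < k | i < j) radix j * h j (z j).
  by rewrite dvdn_sum // => j /radix_mul_base_dvd /dvdn_mulr->.
have := congr1 (modn^~ (radix i * n i)) eq_code.
rewrite !modn_dvdm ?radix_mul_base_dvd_prod // /code !(sum_split_at _ _ i).
rewrite -modnDmr (eqP (high_dvd x)) -[in RHS]modnDmr (eqP (high_dvd y)) !addn0.
rewrite (eq_bigr (fun j => radix j * h j (y j))) => [|j /eq_low-> //].
by move=> /eqP; rewrite eqn_modDl -!muln_modr eqn_pmul2l // => /eqP.
Qed.

Lemma mixed_radix_inj (x y : forall i, D i) :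
  code x = code y %[mod \prod_(j < k) n j] -> forall i, x i = y i.
Proof.
move=> eq_code.
suff eq_at m (i : 'I_k) : i = m :> nat -> x i = y i by move=> i; exact: eq_at.
elim/ltn_ind: m i => m IHm i def_i; apply: mixed_radix_digit => // j lt_ji.
by apply: (IHm j _ j) => //; rewrite -def_i.
Qed.

End MixedRadix.

Section DirectProductNeighbours.

Context {k : nat} {T : 'I_k -> finType} {e : forall i, rel (T i)}.
Context {r : 'I_k -> nat}.
Hypothesis e_regular : forall i, regular (e i) (r i).
Variable x : {dffun forall i, T i}.

(* The neighbours of x in the direct product whose i-th coordinate is z form
   the family of the neighbourhoods N(x_j), j <> i, together with {z} if z is
   adjacent to x_i; the dependent equality at i is expressed with tags. *)
Lemma card_nbr_fiber (i : 'I_k) (z : T i) :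
  #|[pred y | direct_product e x y && (y i == z)]| =
  e i (x i) z * \prod_(j < k | j != i) r j.
Proof.
pose F j := [pred t : T j | e j (x j) t && ((j == i) ==> (Tagged T t == Tagged T z))].
have F_i t : (t \in F i) = e i (x i) z && (t == z).
  by rewrite inE eqxx /= eq_Tagged /=; case: (t =P z) => [->|]; rewrite ?andbF.
rewrite (@eq_card _ _ (family F : simpl_pred {dffun forall j, T j})); last first.
  move=> y; rewrite unfold_in /=; apply/andP/familyP => [[/forallP nbr /eqP yi] j | Fy].
    by rewrite inE nbr /=; apply/implyP => /eqP ji; subst j; rewrite yi.
  have := Fy i; rewrite F_i => /andP[_ yi].
  by split=> //; apply/forallP => j; case/andP: (Fy j).
rewrite card_family foldrE big_map big_enum /= (bigD1 i) //=.
congr (_ * _).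
  rewrite (@eq_card _ _ [pred t | e i (x i) z && (t == z)]) => [|t]; last exact: F_i.
  by case: (e i (x i) z); [exact: card1 | exact: card0].
apply: eq_bigr => j ji; rewrite -(e_regular j (x j)); apply: eq_card => t.
by rewrite !unfold_in /= (negbTE ji) andbT.
Qed.

Lemma sum_nbr_coord (i : 'I_k) (g : T i -> nat) :
  \sum_(y | direct_product e x y) g (y i) =
  \prod_(j < k | j != i) r j * \sum_(z | e i (x i) z) g z.
Proof.
rewrite (partition_big (fun y : {dffun forall j, T j} => y i) predT) //=.
rewrite big_distrr /= [RHS]big_mkcond /=; apply: eq_bigr => z _.
rewrite (eq_bigr (fun _ => g z)) => [|y /andP[_ /eqP->] //].
by rewrite sum_nat_const card_nbr_fiber; case: (e i (x i) z); rewrite ?mul1n.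
Qed.

End DirectProductNeighbours.

Section ProductLabelling.

Context {k : nat} {T : 'I_k -> finType} {e : forall i, rel (T i)}.
Context {r : 'I_k -> nat}.
Hypothesis e_regular : forall i, regular (e i) (r i).
Variable f : forall i, T i -> 'I_#|T i|.

Let V := {dffun forall i, T i}.
Let radixT := radix k (fun j => #|T j|).

(* r / r_i, the number of product-neighbours over a fixed neighbour of x_i. *)
Let cofactor (i : 'I_k) : nat := \prod_(j < k | j != i) r j.

Lemma card_product : #|V| = \prod_(j < k) #|T j|.
Proof. by rewrite card_dep_ffun foldrE big_map big_enum. Qed.

Definition product_code (y : V) : nat := \sum_(i < k) radixT i * f i (y i).

Definition product_label (y : V) : 'I_#|V| :=
  Ordinal (ltn_pmod (product_code y) (card_gt0_of y)).

Lemma product_label_bij : (forall i, bijective (f i)) -> bijective product_label.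
Proof.
move=> f_bij; apply: inj_card_bij; last by rewrite card_ord.
move=> y y' /(congr1 val) /= eq_code; apply/ffunP.
move: eq_code; rewrite card_product /product_code.
apply: (@mixed_radix_inj k (fun j => #|T j|) T (fun i t => nat_of_ord (f i t))).
- by move=> i; exact: card_gt0_of (y i).
- by move=> i a b; rewrite !modn_small // => /val_inj /(bij_inj (f_bij i)).
Qed.

Lemma product_code_nbr_sum (x : V) :
  \sum_(y | direct_product e x y) product_code y =
  \sum_(i < k) radixT i * (cofactor i * \sum_(z | e i (x i) z) f i z).
Proof.
rewrite exchange_big /=; apply: eq_bigr => i _.
by rewrite -(sum_nbr_coord e_regular x i (fun z => nat_of_ord (f i z))) big_distrr.
Qed.

Lemma weight_product_label (x : V) :
  weight (direct_product e) product_label x =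
  (\sum_(y | direct_product e x y) product_code y) %% #|V|.
Proof. exact: modn_summ. Qed.

(* The weights of the product labelling are mixed-radix codes whose digits,
   the f_i-weights scaled by the units r / r_i, determine the vertex. *)
Lemma product_label_antimagic :
  (forall i, coprime #|T i| (cofactor i)) ->
  (forall i, injective (weight (e i) (f i))) ->
  injective (weight (direct_product e) product_label).
Proof.
move=> co f_antimagic x x'; rewrite !weight_product_label !product_code_nbr_sum.
rewrite card_product => eq_code; apply/ffunP; move: eq_code.
apply: (@mixed_radix_inj k (fun j => #|T j|) T
          (fun i t => cofactor i * \sum_(z | e i t z) f i z)).
- by move=> i; exact: card_gt0_of (x i).
- by move=> i a b /(coprime_mulKmod (co i)); exact: f_antimagic.
Qed.

End ProductLabelling.

Theorem mainTheorem14 (k : nat) (T : 'I_k -> finType)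
    (e : forall i, rel (T i)) (r : 'I_k -> nat) :
  (forall i, simple_graph (e i)) ->
  (forall i, regular (e i) (r i)) ->
  (forall i, coprime #|T i| (\prod_(j < k | j != i) r j)) ->
  (forall i, Zn_distance_antimagic (e i)) ->
  Zn_distance_antimagic (direct_product e).
Proof.
move=> _ e_regular co antimagic.
have [f f_antimagic] := fin_all_exists antimagic.
have [f_bij f_inj] := all_and2 f_antimagic.
exists (product_label f); split; first exact: product_label_bij.
exact: product_label_antimagic e_regular f co f_inj.
Qed.
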